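(* Let $s,q\in\mathbb N$ and $\epsilon\in(0,1)$. Let $\xi$ be a detailing of a distribution $\mu$ over $\{0,1\}^n$ with respect to a finite set $A$, with weight distribution $\eta=\xi|_2$ and type distribution $\Lambda$. If $\xi$ is $\left(\frac{\epsilon}{3(s+1)},q\right)$-good and $n\ge\frac{6q^2(s+1)}{\epsilon}$, then $d_{TV}(\mathcal{D}_{sim}(\eta,\Lambda),\mathcal{D}^{s,q}_{test}(\mu))\le\epsilon$.
   Context: A detailing of $\mu$ with respect to a finite set $A$ is a distribution $\xi$ over $\{0,1\}^n\times A$ whose marginal on $\{0,1\}^n$ is $\mu$; its weight distribution is the marginal $\xi|_2$ on $A$, and for $a$ with $\xi|_2(a)>0$, $\xi|_1^{2:a}$ denotes the distribution of the first coordinate conditioned on the second being $a$. The type of index $i\in[n]$ is $t_i\in[0,1]^A$ with $t_i(a)=\Pr_{x\sim\xi|_1^{2:a}}[x_i=1]$ if $\xi|_2(a)>0$ and $t_i(a)=0$ otherwise; the type distribution $\Lambda$ is the distribution of $t_{\mathbf i}$ for $\mathbf i$ uniform in $[n]$. For a distribution $\nu$ over $\{0,1\}^n$, a $q$-tuple $(j_1,\dots,j_q)$ of distinct indices is $\epsilon$-independent with respect to $\nu$ if $d_{TV}(\nu|_{\{j_1,\dots,j_q\}},\prod_{\ell=1}^q\nu|_{j_\ell})\le\epsilon$ (projection vs. product of one-coordinate marginals); $\nu$ is $(\epsilon,q)$-good if at least a $1-\epsilon$ fraction of the $q$-tuples of distinct indices are $\epsilon$-independent w.r.t. $\nu$;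 the detailing $\xi$ is $(\epsilon,q)$-good if there is $J\subseteq A$ with $\xi|_2(J)\ge1-\epsilon$ such that $\xi|_1^{2:a}$ is $(\epsilon,q)$-good for every $a\in J$. $\mathcal{D}_{sim}(\eta,\Lambda)$ is the distribution on $\{0,1\}^{s\times q}$ of the matrix $M$ obtained by drawing $t_1,\dots,t_q\sim\Lambda$ and $a_1,\dots,a_s\sim\eta$ independently, and then each $M_{i,j}\sim\mathrm{Ber}(t_j(a_i))$ independently. $\mathcal{D}^{s,q}_{test}(\mu)$ is the distribution of the matrix $M_{i,k}=x^i_{j_k}$ where $x^1,\dots,x^s\sim\mu$ independently and $j_1,\dots,j_q$ are independent uniform elements of $[n]$. *)

From HB Require Import structures.
From mathcomp Require Import all_boot all_order all_algebra.
Set Implicit Arguments. Unset Strict Implicit. Unset Printing Implicit Defensive.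
Import Order.TTheory GRing.Theory Num.Theory.
Local Open Scope ring_scope.

Section Defs.
Variable R : realFieldType.

Definition bvec (n : nat) := {ffun 'I_n -> bool}.

Definition is_dist (T : finType) (p : {ffun T -> R}) : Prop :=
  (forall x, 0 <= p x) /\ \sum_x p x = 1.

Definition dTV (T : finType) (p p' : {ffun T -> R}) : R :=
  2^-1 * \sum_x `|p x - p' x|.

Definition ber (p : R) (b : bool) : R := if b then p else 1 - p.

Definition marg1 (T A : finType) (xi : {ffun T * A -> R}) : {ffun T -> R} :=
  [ffun x => \sum_a xi (x, a)].
Definition marg2 (T A : finType) (xi : {ffun T * A -> R}) : {ffun A -> R} :=
  [ffun a => \sum_x xi (x, a)].

Definition is_detailing (n : nat) (A : finType) (mu : {ffun bvec n -> R})
  (xi : {ffun bvec n * A -> R}) : Prop :=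
  is_dist xi /\ marg1 xi = mu.

Definition cond1 (T A : finType) (xi : {ffun T * A -> R}) (a : A) : {ffun T -> R} :=
  [ffun x => xi (x, a) / marg2 xi a].

Definition type_of (n : nat) (A : finType) (xi : {ffun bvec n * A -> R})
  (i : 'I_n) : {ffun A -> R} :=
  [ffun a => if 0 < marg2 xi a then \sum_(x : bvec n | x i) cond1 xi a x else 0].

(* type distribution Lambda: the distribution of t_i for i uniform in [n],
   represented as a finitely supported distribution: a list of
   (type, probability) pairs with distinct types. *)
Definition type_dist (n : nat) (A : finType) (xi : {ffun bvec n * A -> R})
  : seq ({ffun A -> R} * R) :=
  [seq (t, #|[set i : 'I_n | type_of xi i == t]|%:R / n%:R)
  | t <- undup [seq type_of xi i | i <- enum 'I_n]].

Definition marg_coord (n : nat) (nu : {ffun bvec n -> R}) (i : 'I_n) : {ffun bool -> R} :=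
  [ffun b => \sum_(x : bvec n | x i == b) nu x].

Definition proj (n q : nat) (nu : {ffun bvec n -> R}) (j : {ffun 'I_q -> 'I_n})
  : {ffun bvec q -> R} :=
  [ffun y : bvec q => \sum_(x : bvec n | [forall k, x (j k) == y k]) nu x].

Definition prod_marg (n q : nat) (nu : {ffun bvec n -> R}) (j : {ffun 'I_q -> 'I_n})
  : {ffun bvec q -> R} :=
  [ffun y : bvec q => \prod_(k < q) marg_coord nu (j k) (y k)].

Definition eps_indep (n q : nat) (eps : R) (nu : {ffun bvec n -> R})
  (j : {ffun 'I_q -> 'I_n}) : bool :=
  dTV (proj nu j) (prod_marg nu j) <= eps.

Definition good_dist (n : nat) (eps : R) (q : nat) (nu : {ffun bvec n -> R}) : Prop :=
  (1 - eps) * #|[set j : {ffun 'I_q -> 'I_n} | injectiveb j]|%:R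
    <= #|[set j : {ffun 'I_q -> 'I_n} | injectiveb j && eps_indep eps nu j]|%:R.

Definition good_detailing (n : nat) (A : finType) (eps : R) (q : nat)
  (xi : {ffun bvec n * A -> R}) : Prop :=
  exists J : {set A},
    1 - eps <= \sum_(a in J) marg2 xi a /\
    forall a, a \in J -> 0 < marg2 xi a /\ good_dist eps q (cond1 xi a).

(* D_sim(eta, Lambda) on {0,1}^{s x q}: draw t_1..t_q ~ Lambda (indexing the
   support list of Lambda), a_1..a_s ~ eta, then M_{ij} ~ Ber(t_j(a_i)). *)
Definition D_sim (s q : nat) (A : finType) (eta : {ffun A -> R})
  (Lam : seq ({ffun A -> R} * R)) : {ffun 'M[bool]_(s, q) -> R} :=
  [ffun M : 'M[bool]_(s, q) => \sum_(a : {ffun 'I_s -> A})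
               \sum_(k : {ffun 'I_q -> 'I_(size Lam)})
                 (\prod_(i < s) eta (a i)) *
                 (\prod_(j < q) (nth (0, 0) Lam (k j)).2) *
                 \prod_(i < s) \prod_(j < q)
                     ber ((nth (0, 0) Lam (k j)).1 (a i)) (M i j)].

(* D_test^{s,q}(mu): x^1..x^s ~ mu independently, j_1..j_q uniform in [n]
   independently, M_{ik} = x^i_{j_k}. *)
Definition D_test (s q n : nat) (mu : {ffun bvec n -> R}) : {ffun 'M[bool]_(s, q) -> R} :=
  [ffun M : 'M[bool]_(s, q) => \sum_(x : {ffun 'I_s -> bvec n})
               \sum_(j : {ffun 'I_q -> 'I_n})
                 (\prod_(i < s) mu (x i)) * (n%:R ^+ q)^-1 *
                 (if [forall i, forall k, x i (j k) == M i k] then 1 else 0)].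

End Defs.

(* Both matrix distributions are mixtures, over weights a_1..a_s ~ eta and column
   indices j_1..j_q uniform in [n], of products of independent rows.  Given a_i = b,
   a row of D_test is the projection of xi|_1^{2:b} onto the columns j, and a row of
   D_sim is the product of the one-coordinate marginals of that projection, because
   Lambda^q is exactly the law of the types of q uniform indices.  Convexity of d_TV
   and the hybrid argument for products bound d_TV by the average over (a, j) of the
   sum of the row distances.  For injective j a row is e-close unless b lies outside J
   (eta-mass at most e) or j is not e-independent (at most an e fraction of injective
   tuples), which gives 3 s e in total; non-injective j have probability at most q^2/n. *)
From HB Require Import structures.
From mathcomp Require Import all_boot all_order all_algebra.
From mathcomp Require Import zify ring lra.
Import Order.TTheory GRing.Theory Num.Theory.
Set Implicit Arguments. Unset Strict Implicit. Unset Printing Implicit Defensive.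

Lemma ffact_leq_expn (n m : nat) : n ^_ m <= n ^ m.
Proof.
elim: m => // m IH; rewrite ffactnSr expnS mulnC.
exact: leq_mul (leq_subr m n) IH.
Qed.

Lemma expn_ffact_gap (n q : nat) : n * (n ^ q - n ^_ q) <= q ^ 2 * n ^ q.
Proof.
suff gap : n ^ q * n <= n ^_ q * n + q ^ 2 * n ^ q by rewrite mulnBr; lia.
elim: q => [|q IH]; first by rewrite ffactn0 expn0 mul0n addn0.
have step : n ^_ q * n <= n ^_ q.+1 + q * n ^ q.
  rewrite ffactnSr; have := ffact_leq_expn n q; have : n <= n - q + q by lia.
  nia.
rewrite expnS; nia.
Qed.

Lemma card_noninjective_ffuns (q n : nat) :
  #|[set j : {ffun 'I_q -> 'I_n} | ~~ injectiveb j]| = n ^ q - n ^_ q.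
Proof.
have <- : #|[set j : {ffun 'I_q -> 'I_n} | injectiveb j]| = n ^_ q.
  by rewrite card_inj_ffuns !card_ord.
have <- : #|{ffun 'I_q -> 'I_n}| = n ^ q by rewrite card_ffun !card_ord.
rewrite -(cardsC [set j : {ffun 'I_q -> 'I_n} | injectiveb j]) addKn.
by apply: eq_card => j; rewrite !inE.
Qed.

Local Open Scope ring_scope.

Lemma ffact_div_expn_le1 (R : realFieldType) (n q : nat) :
  (n ^_ q)%:R / n%:R ^+ q <= 1 :> R.
Proof.
have [nq0|nq_neq0] := eqVneq (n%:R ^+ q : R) 0; first by rewrite nq0 invr0 mulr0.
rewrite ler_pdivrMr ?lt0r ?nq_neq0 ?exprn_ge0 // mul1r -natrX ler_nat.
exact: ffact_leq_expn.
Qed.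

Lemma expn_ffact_gap_div (R : realFieldType) (n q : nat) :
  (n ^ q - n ^_ q)%:R / n%:R ^+ q <= (q ^ 2)%:R / n%:R :> R.
Proof.
case: n => [|n].
  have -> : (0 ^ q - 0 ^_ q = 0)%N by case: q => [|q]; rewrite ?expn0 ?ffactn0 ?exp0n ?ffact0n.
  by rewrite mul0r invr0 mulr0.
rewrite ler_pdivrMr ?exprn_gt0 ?ltr0n // mulrAC ler_pdivlMr ?ltr0n //.
by rewrite -natrX -!natrM ler_nat mulnC expn_ffact_gap.
Qed.

Section Distributions.
Variable R : realFieldType.

Lemma dTVC (T : finType) (p p' : {ffun T -> R}) : dTV p p' = dTV p' p.
Proof. by rewrite /dTV; congr (_ * _); apply: eq_bigr => x _; rewrite distrC. Qed.

Lemma dTV_le1 (T : finType) (p p' : {ffun T -> R}) :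
  is_dist p -> is_dist p' -> dTV p p' <= 1.
Proof.
move=> [p0 p1] [p'0 p'1]; rewrite /dTV ler_pdivrMl ?ltr0n // mulr1.
apply: (le_trans (ler_sum _ (fun x _ => ler_normB (p x) (p' x)))).
rewrite big_split /=; under eq_bigr => x _ do rewrite ger0_norm //.
by under [X in _ + X]eq_bigr => x _ do rewrite ger0_norm //; rewrite p1 p'1.
Qed.

Lemma dTV_mixture (T K : finType) (c : K -> R) (p p' : K -> T -> R) :
  (forall k, 0 <= c k) ->
  dTV [ffun x => \sum_k c k * p k x] [ffun x => \sum_k c k * p' k x]
    <= \sum_k c k * dTV [ffun x => p k x] [ffun x => p' k x].
Proof.
move=> c_ge0; rewrite /dTV.
have -> : \sum_k c k * (2^-1 * \sum_x `|[ffun x => p k x] x - [ffun x => p' k x] x|) =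
    2^-1 * \sum_x \sum_k c k * `|p k x - p' k x|.
  rewrite exchange_big mulr_sumr; apply: eq_bigr => k _.
  rewrite mulrCA mulr_sumr; congr (_ * _); apply: eq_bigr => x _.
  by rewrite !ffunE.
rewrite ler_pM2l ?invr_gt0 ?ltr0n //; apply: ler_sum => x _.
rewrite !ffunE -sumrB; apply: (le_trans (ler_norm_sum _ _ _)); apply: ler_sum => k _.
by rewrite -mulrBr normrM ger0_norm.
Qed.

Lemma dTV_comp_bij (T T' : finType) (h : T -> T') (p p' : {ffun T' -> R}) :
  bijective h -> dTV [ffun x => p (h x)] [ffun x => p' (h x)] = dTV p p'.
Proof.
move=> h_bij; rewrite /dTV (reindex h) /=; last exact: onW_bij.
by under eq_bigr do rewrite !ffunE.
Qed.

Definition prod_dist (I T : finType) (p : I -> {ffun T -> R}) : {ffun {ffun I -> T} -> R} :=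
  [ffun y : {ffun I -> T} => \prod_i p i (y i)].

Lemma is_dist_prod (I T : finType) (p : I -> {ffun T -> R}) :
  (forall i, is_dist (p i)) -> is_dist (prod_dist p).
Proof.
move=> p_dist; split=> [y|]; first by rewrite ffunE prodr_ge0 // => i _; case: (p_dist i).
under eq_bigr do rewrite ffunE.
by rewrite -(bigA_distr_bigA (fun i t => p i t)) big1 // => i _; case: (p_dist i).
Qed.

Lemma prodrB_telescope (s : nat) (x y : 'I_s -> R) :
  \prod_i x i - \prod_i y i = \sum_(m < s) \prod_(i < s)
    (if (i < m)%N then x i else if i == m :> nat then x i - y i else y i).
Proof.
pose H (m : nat) := \prod_(i < s) (if (i < m)%N then x i else y i).
have -> : \prod_i x i - \prod_i y i = H s - H 0%N.
  by congr (_ - _); apply: eq_bigr => i _; rewrite ltn_ord.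
rewrite -(telescope_sumr H (leq0n s)) big_mkord; apply: eq_bigr => m _.
rewrite /H (bigD1 m) //= [in X in _ - X](bigD1 m) //= [RHS](bigD1 m) //=.
have neq_m i : i != m -> ((i < m.+1)%N = (i < m)%N) * ((i == m :> nat) = false).
  by move=> im; rewrite ltnS leq_eqVlt; have /negbTE -> : (i != m :> nat) := im.
rewrite ltnSn ltnn eqxx mulrBl; congr (_ * _ - _ * _).
  by apply: eq_bigr => i /neq_m[-> ->].
by apply: eq_bigr => i /neq_m[_ ->].
Qed.

Lemma dTV_prod_dist (s : nat) (T : finType) (p p' : 'I_s -> {ffun T -> R}) :
  (forall i, is_dist (p i)) -> (forall i, is_dist (p' i)) ->
  dTV (prod_dist p) (prod_dist p') <= \sum_i dTV (p i) (p' i).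
Proof.
move=> p_dist p'_dist; rewrite /dTV -mulr_sumr ler_pM2l ?invr_gt0 ?ltr0n //.
under eq_bigr => y _ do rewrite !ffunE prodrB_telescope.
apply: (le_trans (ler_sum _ (fun y _ => ler_norm_sum _ _ _))).
rewrite exchange_big /=; apply: ler_sum => m _.
under eq_bigr => y _ do rewrite normr_prod.
rewrite -(bigA_distr_bigA (fun (i : 'I_s) (t : T) => `|if (i < m)%N then p i t
  else if i == m :> nat then p i t - p' i t else p' i t|)) /=.
rewrite (bigD1 m) //= ltnn eqxx [X in _ * X]big1 ?mulr1 // => i im.
have /negbTE -> : (i != m :> nat) := im.
have [[p_ge0 p_sum1] [p'_ge0 p'_sum1]] := (p_dist i, p'_dist i).
by case: (i < m)%N; under eq_bigr => t _ do rewrite ger0_norm //.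
Qed.

Lemma sum_fibers (T U : finType) (f : T -> U) (F : T -> R) :
  \sum_u \sum_(x | f x == u) F x = \sum_x F x.
Proof. by rewrite [RHS](partition_big f xpredT). Qed.

Lemma is_dist_proj (n q : nat) (nu : {ffun bvec n -> R}) (j : {ffun 'I_q -> 'I_n}) :
  is_dist nu -> is_dist (proj nu j).
Proof.
move=> [nu_ge0 nu_sum1]; split=> [y|]; first by rewrite ffunE sumr_ge0.
rewrite -nu_sum1 -(sum_fibers (fun x : bvec n => [ffun k => x (j k)])).
apply: eq_bigr => y _; rewrite ffunE; apply: eq_bigl => x.
apply/forallP/eqP => [xy|<- k]; last by rewrite ffunE.
by apply/ffunP => k; rewrite ffunE; apply/eqP.
Qed.

Lemma is_dist_prod_marg (n q : nat) (nu : {ffun bvec n -> R}) (j : {ffun 'I_q -> 'I_n}) :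
  is_dist nu -> is_dist (prod_marg nu j).
Proof.
move=> [nu_ge0 nu_sum1]; apply: (@is_dist_prod _ _ (fun k => marg_coord nu (j k))) => k.
split=> [b|]; first by rewrite ffunE sumr_ge0.
rewrite -nu_sum1 -(sum_fibers (fun x : bvec n => x (j k))).
by apply: eq_bigr => b _; rewrite ffunE.
Qed.

Lemma prod_proj (s n q : nat) (nu : {ffun bvec n -> R}) (j : {ffun 'I_q -> 'I_n})
    (y : {ffun 'I_s -> bvec q}) :
  \prod_i proj nu j (y i) = \sum_(x : {ffun 'I_s -> bvec n})
    \prod_i nu (x i) * (if [forall i, forall k, x i (j k) == y i k] then 1 else 0).
Proof.
under eq_bigr do rewrite ffunE big_mkcond.
rewrite (bigA_distr_bigA (fun i (x : bvec n) =>
  if [forall k, x (j k) == y i k] then nu x else 0)); apply: eq_bigr => x _ /=.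
have [/forallP all_match|/forallPn[i /negbTE mismatch]] :=
  boolP [forall i, forall k, x i (j k) == y i k].
  by rewrite mulr1; apply: eq_bigr => i _; rewrite all_match.
by rewrite mulr0 (bigD1 i) //= mismatch mul0r.
Qed.

End Distributions.

Section Detailing.
Variables (R : realFieldType) (n : nat) (A : finType) (xi : {ffun bvec n * A -> R}).
Hypothesis xi_ge0 : forall p, 0 <= xi p.

Local Notation eta := (marg2 xi).
Local Notation c := (cond1 xi).

Lemma marg2_ge0 b : 0 <= eta b.
Proof. by rewrite ffunE sumr_ge0. Qed.

Lemma sum_marg2 : \sum_b eta b = \sum_p xi p.
Proof. by under eq_bigr do rewrite ffunE; rewrite exchange_big pair_big; apply: eq_bigr => -[]. Qed.

Lemma marg2_mul_cond1 b x : eta b * c b x = xi (x, b).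
Proof.
rewrite [c b x]ffunE; have [eta0|eta_neq0] := eqVneq (eta b) 0.
  by rewrite eta0 mul0r; move: eta0; rewrite ffunE => /psumr_eq0P ->.
by rewrite mulrCA divff ?mulr1.
Qed.

Lemma is_dist_cond1 b : 0 < eta b -> is_dist (c b).
Proof.
move=> eta_gt0; split=> [x|]; first by rewrite ffunE divr_ge0 // marg2_ge0.
under eq_bigr => x _ do rewrite [c b x]ffunE.
have eta_sum : \sum_x xi (x, b) = eta b by rewrite ffunE.
by rewrite -mulr_suml eta_sum divff // lt0r_neq0.
Qed.

Lemma marg_coord_cond1 b i z : 0 < eta b ->
  marg_coord (c b) i z = ber (type_of xi i b) z.
Proof.
move=> eta_gt0; rewrite [marg_coord _ _ _]ffunE /type_of [in RHS]ffunE eta_gt0.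
case: z => /=; first by apply: eq_bigl => x; rewrite eqb_id.
have [_ <-] := is_dist_cond1 eta_gt0.
rewrite [X in _ = X - _](bigID (fun x : bvec n => x i)) /= addrC addrK.
by apply: eq_bigl => x; rewrite eqbF_neg.
Qed.

Lemma proj_marg1 q (j : {ffun 'I_q -> 'I_n}) y :
  proj (marg1 xi) j y = \sum_b eta b * proj (c b) j y.
Proof.
rewrite ffunE; under [RHS]eq_bigr do rewrite [proj _ _ _]ffunE mulr_sumr.
rewrite exchange_big; apply: eq_bigr => x _; rewrite ffunE.
by apply: eq_bigr => b _; rewrite marg2_mul_cond1.
Qed.

Lemma type_dist_expectation (g : {ffun A -> R} -> R) :
  \sum_(k < size (type_dist xi))
     (nth (0, 0) (type_dist xi) k).2 * g (nth (0, 0) (type_dist xi) k).1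
  = n%:R^-1 * \sum_i g (type_of xi i).
Proof.
have -> : \sum_(k < size (type_dist xi))
    (nth (0, 0) (type_dist xi) k).2 * g (nth (0, 0) (type_dist xi) k).1 =
    \sum_(p <- type_dist xi) p.2 * g p.1 by rewrite (big_nth (0, 0)) big_mkord.
rewrite big_map.
have fiber t : #|[set i | type_of xi i == t]|%:R / n%:R * g t =
    n%:R^-1 * \sum_(i | type_of xi i == t) g (type_of xi i).
  rewrite mulrAC mulrC mulr_natl -sumr_const; congr (_ * _).
  by apply: eq_big => [i|i]; rewrite inE // => /eqP ->.
under eq_bigr do rewrite fiber; rewrite -mulr_sumr; congr (_ * _).
rewrite (exchange_big_dep xpredT) //=; apply: eq_bigr => i _.
rewrite (eq_bigl (pred1 (type_of xi i))) => [|t]; last by rewrite /= eq_sym.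
rewrite big_const_seq /= count_uniq_mem ?undup_uniq //.
by rewrite mem_undup map_f ?mem_enum //= addr0.
Qed.

Lemma type_dist_tuple_expectation q (g : 'I_q -> {ffun A -> R} -> R) :
  \sum_(k : {ffun 'I_q -> 'I_(size (type_dist xi))}) \prod_l
     ((nth (0, 0) (type_dist xi) (k l)).2 * g l (nth (0, 0) (type_dist xi) (k l)).1)
  = \sum_(j : {ffun 'I_q -> 'I_n}) (n%:R ^+ q)^-1 * \prod_l g l (type_of xi (j l)).
Proof.
rewrite -(bigA_distr_bigA (fun l (k : 'I_(size (type_dist xi))) =>
  (nth (0, 0) (type_dist xi) k).2 * g l (nth (0, 0) (type_dist xi) k).1)).
rewrite -mulr_sumr -(bigA_distr_bigA (fun l (i : 'I_n) => g l (type_of xi i))).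
have -> : (n%:R ^+ q)^-1 = \prod_(l < q) n%:R^-1 :> R by rewrite prodr_const card_ord exprVn.
by rewrite -big_split; apply: eq_bigr => l _; rewrite type_dist_expectation.
Qed.

(* The types are junk (0) where eta b = 0, hence the factor eta b on both sides. *)
Lemma marg2_mul_prod_marg q b (j : {ffun 'I_q -> 'I_n}) (z : bvec q) :
  eta b * \prod_l ber (type_of xi (j l) b) (z l) = eta b * prod_marg (c b) j z.
Proof.
have [eta_gt0|eta_le0] := ltrP 0 (eta b); last first.
  have eta0 : eta b = 0 by apply/eqP; rewrite eq_le eta_le0 marg2_ge0.
  by rewrite eta0 !mul0r.
rewrite [prod_marg _ _ _]ffunE; congr (_ * _).
by apply: eq_bigr => l _; rewrite marg_coord_cond1.
Qed.

Section Mixtures.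
Variables s q : nat.

Definition rows (M : 'M[bool]_(s, q)) : {ffun 'I_s -> bvec q} := [ffun i => [ffun k => M i k]].

Lemma rows_bij : bijective rows.
Proof.
exists (fun y : {ffun 'I_s -> bvec q} => \matrix_(i, k) y i k).
  by move=> M; apply/matrixP => i k; rewrite mxE !ffunE.
by move=> y; apply/ffunP => i; apply/ffunP => k; rewrite !ffunE mxE.
Qed.

Definition tuple_weight (a : {ffun 'I_s -> A}) : R := \prod_i eta (a i).

Lemma D_sim_mixture : D_sim s q eta (type_dist xi) = [ffun M => \sum_k
  (n%:R ^+ q)^-1 * tuple_weight k.1 * prod_dist (fun i => prod_marg (c (k.1 i)) k.2) (rows M)].
Proof.
apply/ffunP => M; rewrite !ffunE.
transitivity (\sum_a \sum_(j : {ffun 'I_q -> 'I_n}) (n%:R ^+ q)^-1 * tuple_weight a *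
  prod_dist (fun i => prod_marg (c (a i)) j) (rows M)); last by rewrite pair_bigA.
apply: eq_bigr => a _.
pose g l (t : {ffun A -> R}) := \prod_i ber (t (a i)) (M i l).
under eq_bigr do rewrite -mulrA [X in _ * (_ * X)]exchange_big -big_split /=.
rewrite -mulr_sumr (type_dist_tuple_expectation g) mulr_sumr; apply: eq_bigr => j _.
rewrite ffunE mulrCA -!mulrA; congr (_ * _).
rewrite [in LHS]exchange_big -!big_split; apply: eq_bigr => i _ /=.
by rewrite -marg2_mul_prod_marg; congr (_ * _); apply: eq_bigr => l _; rewrite !ffunE.
Qed.

Lemma D_test_mixture : D_test s q (marg1 xi) = [ffun M => \sum_k
  (n%:R ^+ q)^-1 * tuple_weight k.1 * prod_dist (fun i => proj (c (k.1 i)) k.2) (rows M)].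
Proof.
apply/ffunP => M; rewrite !ffunE.
transitivity (\sum_a \sum_(j : {ffun 'I_q -> 'I_n}) (n%:R ^+ q)^-1 * tuple_weight a *
  prod_dist (fun i => proj (c (a i)) j) (rows M)); last by rewrite pair_bigA.
rewrite exchange_big [RHS]exchange_big; apply: eq_bigr => j _ /=.
under eq_bigr do rewrite mulrAC.
under [RHS]eq_bigr do rewrite -mulrA.
rewrite -mulr_suml -mulr_sumr mulrC; congr (_ * _).
under [RHS]eq_bigr do rewrite [prod_dist _ _]ffunE -big_split /=.
rewrite -(bigA_distr_bigA (fun i b => eta b * proj (c b) j (rows M i))).
under eq_bigr do rewrite -proj_marg1.
rewrite prod_proj; apply: eq_bigr => x _.
by under [in RHS]eq_forallb => i do under eq_forallb => k do rewrite !ffunE.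
Qed.

Lemma dTV_D_sim_D_test_le_avg :
  dTV (D_sim s q eta (type_dist xi)) (D_test s q (marg1 xi)) <=
  \sum_a \sum_(j : {ffun 'I_q -> 'I_n}) (n%:R ^+ q)^-1 * tuple_weight a *
    dTV (prod_dist (fun i => prod_marg (c (a i)) j)) (prod_dist (fun i => proj (c (a i)) j)).
Proof.
rewrite D_sim_mixture D_test_mixture pair_bigA; apply: le_trans; first apply: dTV_mixture.
  move=> k; rewrite mulr_ge0 ?invr_ge0 ?exprn_ge0 ?ler0n ?prodr_ge0 // => i _.
  exact: marg2_ge0.
by apply: ler_sum => k _ /=; rewrite dTV_comp_bij //; apply: rows_bij.
Qed.

Hypothesis eta_sum1 : \sum_b eta b = 1.

Lemma sum_tuple_weight : \sum_a tuple_weight a = 1.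
Proof. by rewrite -(bigA_distr_bigA (fun _ b => eta b)) big1. Qed.

Lemma sum_tuple_weight_coord (f : A -> R) :
  \sum_a tuple_weight a * \sum_i f (a i) = s%:R * \sum_b eta b * f b.
Proof.
under eq_bigr do rewrite mulr_sumr; rewrite exchange_big /=.
rewrite mulr_natl -[X in _ *+ X](card_ord s) -sumr_const; apply: eq_bigr => i0 _.
pose g i b := if i == i0 then eta b * f b else eta b.
transitivity (\sum_(a : {ffun 'I_s -> A}) \prod_i g i (a i)).
  apply: eq_bigr => a _; rewrite /tuple_weight (bigD1 i0) //= [RHS](bigD1 i0) //=.
  by rewrite /g eqxx mulrAC; congr (_ * _); apply: eq_bigr => i /negbTE ->.
rewrite -bigA_distr_bigA (bigD1 i0) //= [X in _ * X]big1 ?mulr1.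
  by apply: eq_bigr => b _; rewrite /g eqxx.
by move=> i /negbTE i_neq; under eq_bigr do rewrite /g i_neq.
Qed.

Variables (J : {set A}) (e : R).
Hypothesis e_ge0 : 0 <= e.
Hypothesis J_mass : 1 - e <= \sum_(b in J) eta b.
Hypothesis J_good : forall b, b \in J -> 0 < eta b /\ good_dist e q (c b).

Definition row_bound (b : A) (j : {ffun 'I_q -> 'I_n}) : R :=
  if (b \in J) && eps_indep e (c b) j then e else 1.

Definition tuple_bound (a : {ffun 'I_s -> A}) (j : {ffun 'I_q -> 'I_n}) : R :=
  if injectiveb j then \sum_i row_bound (a i) j else 1.

Lemma dTV_rows_le (a : {ffun 'I_s -> A}) (j : {ffun 'I_q -> 'I_n}) :
  tuple_weight a * dTV (prod_dist (fun i => prod_marg (c (a i)) j))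
                       (prod_dist (fun i => proj (c (a i)) j))
  <= tuple_weight a * tuple_bound a j.
Proof.
have [w0|w_neq0] := eqVneq (tuple_weight a) 0; first by rewrite w0 !mul0r.
have eta_gt0 i : 0 < eta (a i).
  rewrite lt0r marg2_ge0 andbT; apply: contra_neq w_neq0 => eta0.
  by rewrite /tuple_weight (bigD1 i) //= eta0 mul0r.
have sim_dist i := is_dist_prod_marg j (is_dist_cond1 (eta_gt0 i)).
have test_dist i := is_dist_proj j (is_dist_cond1 (eta_gt0 i)).
apply: ler_wpM2l; first by apply: prodr_ge0 => i _; apply: marg2_ge0.
rewrite /tuple_bound; case: ifP => _; last by apply: dTV_le1; apply: is_dist_prod.
apply: le_trans (dTV_prod_dist sim_dist test_dist) _; apply: ler_sum => i _.
rewrite /row_bound; case: ifP => [/andP[_ indep]|_]; last exact: dTV_le1.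
by rewrite dTVC.
Qed.

Lemma sum_row_bound_injective b :
  \sum_(j : {ffun 'I_q -> 'I_n} | injectiveb j) row_bound b j
    <= (2 * e + (b \notin J)%:R) * #|[set j : {ffun 'I_q -> 'I_n} | injectiveb j]|%:R.
Proof.
have sum1_ge0 (P : pred {ffun 'I_q -> 'I_n}) : 0 <= \sum_(j | P j) 1 :> R.
  by rewrite sumr_ge0 // => j _; rewrite ler01.
rewrite -sum1dep_card natr_sum.
have [bJ|bJ] := boolP (b \in J); last first.
  rewrite (eq_bigr (fun _ => 1)) => [|j _]; last by rewrite /row_bound (negbTE bJ).
  by rewrite /=; have := mulr_ge0 e_ge0 (sum1_ge0 (fun j => injectiveb j)); nra.
have [_ good] := J_good bJ; rewrite /good_dist -!sum1dep_card !natr_sum in good.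
rewrite (bigID (eps_indep e (c b))) /= in good.
rewrite (bigID (eps_indep e (c b))) [X in _ <= _ * X](bigID (eps_indep e (c b))) /=.
rewrite (eq_bigr (fun _ => e * 1)) => [|j /andP[_ indep]]; last first.
  by rewrite /row_bound bJ indep mulr1.
rewrite [X in _ + X <= _](eq_bigr (fun _ => 1)) => [|j /andP[_ /negbTE dep]]; last first.
  by rewrite /row_bound bJ dep.
rewrite -mulr_sumr /=; move: good.
have := sum1_ge0 (fun j => injectiveb j && eps_indep e (c b) j).
have := mulr_ge0 e_ge0 (sum1_ge0 (fun j => injectiveb j && ~~ eps_indep e (c b) j)).
rewrite /=; nra.
Qed.

Lemma weighted_row_bound_le : \sum_b eta b * (2 * e + (b \notin J)%:R) <= 3 * e.
Proof.
under eq_bigr do rewrite mulrDr; rewrite big_split /= -mulr_suml eta_sum1 mul1r.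
have -> : \sum_b eta b * (b \notin J)%:R = 1 - \sum_(b in J) eta b.
  rewrite -[in RHS]eta_sum1 [in RHS](bigID (mem J)) /= addrC addrK [RHS]big_mkcond /=.
  by apply: eq_bigr => b _; case: (b \in J); rewrite ?mulr0 ?mulr1.
by have := J_mass; lra.
Qed.

Lemma sum_injective_row_bound_le :
  \sum_(j : {ffun 'I_q -> 'I_n} | injectiveb j) \sum_b eta b * row_bound b j
    <= 3 * e * (n ^_ q)%:R.
Proof.
have -> : (n ^_ q)%:R = #|[set j : {ffun 'I_q -> 'I_n} | injectiveb j]|%:R :> R.
  by rewrite card_inj_ffuns !card_ord.
rewrite exchange_big /=.
apply: (@le_trans _ _ ((\sum_b eta b * (2 * e + (b \notin J)%:R)) *
    #|[set j : {ffun 'I_q -> 'I_n} | injectiveb j]|%:R)); last first.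
  by rewrite ler_wpM2r ?ler0n ?weighted_row_bound_le.
rewrite mulr_suml; apply: ler_sum => b _; rewrite -mulr_sumr -mulrA.
by rewrite ler_wpM2l ?marg2_ge0 ?sum_row_bound_injective.
Qed.

Lemma sum_tuple_bound :
  \sum_(j : {ffun 'I_q -> 'I_n}) \sum_a tuple_weight a * tuple_bound a j =
  s%:R * \sum_(j : {ffun 'I_q -> 'I_n} | injectiveb j) \sum_b eta b * row_bound b j
    + (n ^ q - n ^_ q)%:R.
Proof.
rewrite (bigID (fun j : {ffun 'I_q -> 'I_n} => injectiveb j)) /= mulr_sumr; congr (_ + _).
  apply: eq_bigr => j inj; under eq_bigr do rewrite /tuple_bound inj.
  exact: sum_tuple_weight_coord.
rewrite -card_noninjective_ffuns -sum1dep_card natr_sum; apply: eq_bigr => j /negbTE ninj.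
by under eq_bigr do rewrite /tuple_bound ninj mulr1; rewrite sum_tuple_weight.
Qed.

Lemma dTV_D_sim_D_test_bound :
  dTV (D_sim s q eta (type_dist xi)) (D_test s q (marg1 xi))
    <= 3 * e * s%:R + (q ^ 2)%:R / n%:R.
Proof.
apply: le_trans dTV_D_sim_D_test_le_avg _.
have u_ge0 : 0 <= (n%:R ^+ q)^-1 :> R by rewrite invr_ge0 exprn_ge0 ?ler0n.
apply: (@le_trans _ _ ((n%:R ^+ q)^-1 *
  \sum_(j : {ffun 'I_q -> 'I_n}) \sum_a tuple_weight a * tuple_bound a j)).
  rewrite exchange_big mulr_sumr; apply: ler_sum => a _; rewrite mulr_sumr.
  by apply: ler_sum => j _; rewrite -mulrA ler_wpM2l // dTV_rows_le.
rewrite sum_tuple_bound mulrDr [_^-1 * _%:R]mulrC; apply: lerD.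
  rewrite mulrCA mulrC ler_wpM2r ?ler0n //.
  apply: le_trans (ler_wpM2l u_ge0 sum_injective_row_bound_le) _.
  by rewrite mulrCA ler_piMr ?mulr_ge0 // mulrC ffact_div_expn_le1.
exact: expn_ffact_gap_div.
Qed.

End Mixtures.

End Detailing.

Theorem lemma4p1 (R : realFieldType) (s q n : nat) (eps : R)
  (A : finType) (mu : {ffun bvec n -> R}) (xi : {ffun bvec n * A -> R}) :
  0 < eps < 1 ->
  is_dist mu ->
  is_detailing mu xi ->
  good_detailing (eps / (3 * (s.+1)%:R)) q xi ->
  6 * (q ^ 2 * s.+1)%:R / eps <= n%:R ->
  dTV (D_sim s q (marg2 xi) (type_dist xi)) (D_test s q mu) <= eps.
Proof.
move=> /andP[eps_gt0 _] _ [[xi_ge0 xi_sum1] <-] [J [J_mass J_good]] n_large.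
set e := eps / _ in J_mass J_good.
have e_ge0 : 0 <= e by rewrite divr_ge0 ?mulr_ge0 ?ler0n ?ltW.
have eta_sum1 : \sum_b marg2 xi b = 1 by rewrite sum_marg2.
apply: le_trans (dTV_D_sim_D_test_bound xi_ge0 s eta_sum1 e_ge0 J_mass J_good) _.
have eps_split : 3 * e * (s.+1)%:R = eps.
  by rewrite /e; field; rewrite addrC natr1 pnatr_eq0.
have q2n : (q ^ 2)%:R / n%:R * (6 * (s.+1)%:R) <= eps.
  have [->|n_gt0] := posnP n; first by rewrite invr0 mulr0 mul0r ltW.
  rewrite mulrAC ler_pdivrMr ?ltr0n // [eps * _]mulrC -ler_pdivrMr //.
  by apply: le_trans n_large; rewrite natrM mulrCA.
have s1_gt0 : 0 < (s.+1)%:R :> R by rewrite ltr0n.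
(* The bound is eps (s + 1/6) / (s + 1). *)
rewrite -natr1 in eps_split q2n s1_gt0.
nra.
Qed.
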